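(* Let $\mu$ be a differentiable growth rate and $\gamma_1,\gamma_2\in\rho^{ND}_\mu(A)$ with $\gamma_1<\gamma_2$. The following are equivalent: (a) $\mathcal U_{\gamma_2}\cap\mathcal V_{\gamma_1}\ne\mathbb R\times\{0\}$; (b) $[\gamma_1,\gamma_2]\cap\Sigma^{ND}_\mu(A)\ne\emptyset$; (c) $\operatorname{rank}\mathcal U_{\gamma_1}<\operatorname{rank}\mathcal U_{\gamma_2}$; (d) $\operatorname{rank}\mathcal V_{\gamma_1}>\operatorname{rank}\mathcal V_{\gamma_2}$.
   Context: Fix $n\ge1$ and a norm on $\mathbb R^n$. Let $A:\mathbb R\to M_n(\mathbb R)$ be continuous with evolution operator $\Phi(t,s)$. $\operatorname{sign}(s)\in\{-1,0,1\}$. A growth rate is a strictly increasing $\mu:\mathbb R\to(0,\infty)$, $\mu(0)=1$, $\mu\to+\infty$ at $+\infty$, $\mu\to0$ at $-\infty$; differentiable if it is differentiable. A linear system $x'=C(t)x$ with evolution operator $\Psi$ admits a nonuniform $\mu$-dichotomy (N$\mu$D) if there are projections $P(t)$ with $P(t)\Psi(t,s)=\Psi(t,s)P(s)$ and constants $K\ge1$, $\alpha<0$, $\beta>0$, $\theta,\nu\ge0$, $\alpha+\theta<0$, $\beta-\nu>0$ with ($Q=I-P$) $\|\Psi(t,s)P(s)\|\le K(\mu(t)/\mu(s))^{\alpha}\mu(s)^{\operatorname{sign}(s)\theta}$ for $t\ge s$ and $\|\Psi(t,s)Q(s)\|\le K(\mu(t)/\mu(s))^{\beta}\mu(s)^{\operatorname{sign}(s)\nu}$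 for $t\le s$. $\Sigma^{ND}_\mu(A)=\{\gamma: x'=(A(t)-\gamma\frac{\mu'(t)}{\mu(t)}I)x\text{ admits no N}\mu\text{D}\}$, $\rho^{ND}_\mu(A)=\mathbb R\setminus\Sigma^{ND}_\mu(A)$. $\mathcal U_\gamma=\{(s,\xi):\sup_{t\ge0}\|\Phi(t,s)\xi\|\mu(t)^{-\gamma}<\infty\}$, $\mathcal V_\gamma=\{(s,\xi):\sup_{t\le0}\|\Phi(t,s)\xi\|\mu(t)^{-\gamma}<\infty\}$. These are linear integral manifolds: their fibers $\mathcal W(s)=\{\xi:(s,\xi)\in\mathcal W\}$ are linear subspaces of $\mathbb R^n$ of a dimension independent of $s$, called the rank. Intersection is fiberwise. *)

From HB Require Import structures.
From mathcomp Require Import all_boot all_order all_algebra.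
From mathcomp Require Import all_classical all_reals all_analysis.
Set Implicit Arguments. Unset Strict Implicit. Unset Printing Implicit Defensive.
Import Order.TTheory GRing.Theory Num.Theory.
Import numFieldNormedType.Exports.
Local Open Scope classical_set_scope.
Local Open Scope ring_scope.

Section Defs.
Variable R : realType.

Definition is_norm (n : nat) (N : 'cV[R]_n -> R) : Prop :=
  [/\ forall x, 0 <= N x,
      forall x, N x = 0 -> x = 0,
      forall (a : R) x, N (a *: x) = `|a| * N x &
      forall x y, N (x + y) <= N x + N y].

Definition growth_rate (mu : R -> R) : Prop :=
  [/\ {homo mu : x y / x < y},
      forall t, 0 < mu t,
      mu 0 = 1,
      mu x @[x --> +oo] --> +oo &
      mu x @[x --> -oo] --> (0 : R)].

Definition differentiable_growth_rate (mu : R -> R) : Prop :=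
  growth_rate mu /\ forall t : R, derivable mu t (1 : R).

Definition is_evol_op (n : nat) (C : R -> 'M[R]_n) (Psi : R -> R -> 'M[R]_n) : Prop :=
  (forall s, Psi s s = 1%:M) /\
  (forall (t s : R), is_derive t (1 : R) (fun u : R => Psi u s) (C t *m Psi t s)).

Definition sgnR (s : R) : R := Num.sg s.

(* Nonuniform mu-dichotomy for an evolution operator Psi, w.r.t. the norm N
   (operator-norm bounds written out on vectors). *)
Definition NmuD (n : nat) (N : 'cV[R]_n -> R) (mu : R -> R)
    (Psi : R -> R -> 'M[R]_n) : Prop :=
  exists (P : R -> 'M[R]_n) (K alpha beta theta nu : R),
    [/\ (forall t, P t *m P t = P t),
        (forall t s, P t *m Psi t s = Psi t s *m P s),
        [/\ 1 <= K, alpha < 0, 0 < beta, 0 <= theta & 0 <= nu] /\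
          (alpha + theta < 0 /\ 0 < beta - nu),
        (forall t s xi, s <= t ->
           N (Psi t s *m P s *m xi)
             <= K * (mu t / mu s) `^ alpha * mu s `^ (sgnR s * theta) * N xi) &
        (forall t s xi, t <= s ->
           N (Psi t s *m (1%:M - P s) *m xi)
             <= K * (mu t / mu s) `^ beta * mu s `^ (sgnR s * nu) * N xi)].

Definition admits_NmuD (n : nat) (N : 'cV[R]_n -> R) (mu : R -> R)
    (C : R -> 'M[R]_n) : Prop :=
  exists Psi, is_evol_op C Psi /\ NmuD N mu Psi.

Definition SigmaND (n : nat) (N : 'cV[R]_n -> R) (mu : R -> R)
    (A : R -> 'M[R]_n) : set R :=
  [set gamma | ~ admits_NmuD N mu
      (fun t => A t - (gamma * (derive1 mu t / mu t))%:M)].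

Definition rhoND (n : nat) (N : 'cV[R]_n -> R) (mu : R -> R)
    (A : R -> 'M[R]_n) : set R := ~` SigmaND N mu A.

Definition Uman (n : nat) (N : 'cV[R]_n -> R) (mu : R -> R)
    (Phi : R -> R -> 'M[R]_n) (gamma : R) : set (R * 'cV[R]_n) :=
  [set p | exists M : R, forall t, 0 <= t ->
      N (Phi t p.1 *m p.2) * mu t `^ (- gamma) <= M].

Definition Vman (n : nat) (N : 'cV[R]_n -> R) (mu : R -> R)
    (Phi : R -> R -> 'M[R]_n) (gamma : R) : set (R * 'cV[R]_n) :=
  [set p | exists M : R, forall t, t <= 0 ->
      N (Phi t p.1 *m p.2) * mu t `^ (- gamma) <= M].

Definition fiber (n : nat) (W : set (R * 'cV[R]_n)) (s : R) : set 'cV[R]_n :=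
  [set xi | W (s, xi)].

Definition setdim (n : nat) (S : set 'cV[R]_n) : nat :=
  \max_(k < n.+1 | `[< exists M : 'M[R]_(n, k),
                       (forall j, S (col j M)) /\ \rank M = k >]) (k : nat).

(* Rank of a linear integral manifold: dimension of its fibers
   (independent of s; we use the fiber at s = 0). *)
Definition mrank (n : nat) (W : set (R * 'cV[R]_n)) : nat :=
  setdim (fiber W 0).

End Defs.

From HB Require Import structures.
From mathcomp Require Import all_boot all_order all_algebra.
From mathcomp Require Import all_classical all_reals all_analysis.
From mathcomp Require Import ring lra zify.
Import Order.TTheory GRing.Theory Num.Theory.
Import numFieldNormedType.Exports.
Local Open Scope classical_set_scope.
Local Open Scope ring_scope.
Set Implicit Arguments. Unset Strict Implicit. Unset Printing Implicit Defensive.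

(* Put Psi_g(t, s) = (mu t / mu s)^(-g) Phi(t, s).  By uniqueness of
   solutions of linear equations (a Gronwall estimate on the squared Frobenius
   norm), Psi_g is the only evolution operator of x' = (A - g mu'/mu) x, so g
   lies in the resolvent exactly when Psi_g admits a nonuniform mu-dichotomy,
   with some invariant projection P.  Replacing g by g' multiplies the
   dichotomy estimates by (mu t / mu s)^(g - g'): with the same P, the stable
   estimate persists for all g' > g - e and the unstable one for all
   g' < g + e.  A dichotomy identifies the fibre at 0 of U_g with the range of
   P(0) and that of V_g with its kernel; moreover U_g grows and V_g shrinks
   with g.
   If [g1, g2] contains no spectrum, the fibre of U_g is locally constant in g,
   hence U_g2 = U_g1: the ranks agree and U_g2 meets V_g1 only in 0.  If
   rank P2(0) <= rank P1(0), monotonicity forces P1(0) = P2(0), hence P1 = P2,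
   and the stable estimate at g1 and the unstable one at g2 give a dichotomy
   at every point of [g1, g2].  Otherwise a dimension count yields a nonzero
   vector in range P2(0) and ker P1(0), that is, in U_g2 and V_g1. *)

Section Gronwall.
Variable R : realType.
Implicit Types (g dg : R -> R) (a b c k u : R).

Lemma is_derive_expR_weight g dg k u : is_derive u 1 g (dg u) ->
  is_derive u 1 (fun v => expR (k * v) * g v) (expR (k * u) * (dg u + k * g u)).
Proof.
move=> dgu.
have dlin : is_derive u 1 (fun v : R => k * v) k.
  by apply: is_derive_eq (is_deriveZ k (is_derive_id u 1)) _; rewrite /GRing.scale /= mulr1.
have dexp := is_derive1_comp (is_derive_expR (k * u)) dlin.
by apply: is_derive_eq (is_deriveM dexp dgu) _; rewrite /GRing.scale /=; ring.
Qed.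

Lemma expR_weight_nincr g dg k a b : a <= b ->
  (forall u, is_derive u 1 g (dg u)) -> (forall u, a < u < b -> dg u + k * g u <= 0) ->
  expR (k * b) * g b <= expR (k * a) * g a.
Proof.
move=> ab dg_ dg_le.
have dw u := is_derive_expR_weight k (dg_ u).
have a_in : a \in `[a, b] by rewrite in_itv /= lexx ab.
have b_in : b \in `[a, b] by rewrite in_itv /= lexx ab.
apply: (@ler0_derive1_le_cc R (fun v => expR (k * v) * g v) a b _ _ _ b a b_in a_in ab).
- by move=> u _; exact: ex_derive.
- move=> u; rewrite in_itv /= => /dg_le ?.
  by rewrite derive1E derive_val mulr_ge0_le0.
- by apply: derivable_within_continuous => u _; exact: ex_derive.
Qed.

Lemma expR_weight_ndecr g dg k a b : a <= b ->
  (forall u, is_derive u 1 g (dg u)) -> (forall u, a < u < b -> 0 <= dg u + k * g u) ->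
  expR (k * a) * g a <= expR (k * b) * g b.
Proof.
move=> ab dg_ dg_ge; rewrite -lerN2 -!mulrN.
apply: (@expR_weight_nincr (fun v => - g v) (fun v => - dg v)) => // u /dg_ge.
by rewrite mulrN -opprD oppr_le0.
Qed.

Lemma gronwall_vanish g dg c a b : a <= b ->
  (forall u, is_derive u 1 g (dg u)) -> (forall u, 0 <= g u) ->
  (forall u, a <= u <= b -> `|dg u| <= c * g u) ->
  (g a = 0 -> g b = 0) /\ (g b = 0 -> g a = 0).
Proof.
move=> ab dg_ g_ge0 dg_le.
have dg_le' u : a < u < b -> `|dg u| <= c * g u.
  by case/andP=> /ltW au /ltW ub; apply: dg_le; rewrite au ub.
split=> g0; apply/eqP; rewrite eq_le g_ge0 andbT.
- have := expR_weight_nincr (k := - c) ab dg_.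
  rewrite g0 mulr0 pmulr_rle0 ?expR_gt0 //; apply=> u /dg_le' dgu.
  by have := ler_norm (dg u); lra.
- have := expR_weight_ndecr (k := c) ab dg_.
  rewrite g0 mulr0 pmulr_rle0 ?expR_gt0 //; apply=> u /dg_le' dgu.
  by have := ler_norm (- dg u); rewrite normrN; lra.
Qed.

End Gronwall.

Lemma is_derive_mxP (R : realType) m n (F : R -> 'M[R]_(m, n)) (t : R) D :
  is_derive t 1 F D <-> forall i j, is_derive t 1 (fun u => F u i j) (D i j).
Proof.
split=> [dF i j|dF].
  have dFt : derivable F t 1 by case: dF.
  apply: DeriveDef; first exact: (derivable_mxP F t 1).1 dFt i j.
  by have := derive_mx dFt; rewrite derive_val => ->; rewrite mxE.
have dFt : derivable F t 1 by apply/derivable_mxP => i j; exact: ex_derive.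
apply: DeriveDef => //; rewrite derive_mx //.
by apply/matrixP => i j; rewrite mxE derive_val.
Qed.

Lemma is_derive_mulmxr (R : realType) m n p (F : R -> 'M[R]_(m, n)) D
    (M : 'M[R]_(n, p)) (t : R) :
  is_derive t 1 F D -> is_derive t 1 (fun u => F u *m M) (D *m M).
Proof.
move=> /is_derive_mxP dF; apply/is_derive_mxP => i j.
have dFM k : is_derive t 1 (fun u => F u i k * M k j) (D i k * M k j).
  by apply: is_derive_eq (is_deriveM (dF i k) (is_derive_cst (M k j) t 1)) _;
     rewrite /GRing.scale /= mulr0 add0r mulrC.
have -> : (fun u => (F u *m M) i j) = \sum_k (fun u => F u i k * M k j).
  by apply/funext => u; rewrite mxE fct_sumE.
by rewrite mxE; exact: is_derive_sum.
Qed.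

Lemma is_derive_scalemx (R : realType) m n (c : R -> R) (F : R -> 'M[R]_(m, n))
    dc D (t : R) :
  is_derive t 1 c dc -> is_derive t 1 F D ->
  is_derive t 1 (fun u => c u *: F u) (c t *: D + dc *: F t).
Proof.
move=> dc_ /is_derive_mxP dF; apply/is_derive_mxP => i j.
have -> : (fun u => (c u *: F u) i j) = c * (fun u => F u i j).
  by apply/funext => u; rewrite mxE.
apply: is_derive_eq (is_deriveM dc_ (dF i j)) _.
by rewrite !mxE /GRing.scale /= [F t i j * _]mulrC.
Qed.

Section LinearODE.
Variables (R : realType) (n m : nat).

Definition sqfrob (X : 'M[R]_(n, m)) : R := \sum_i \sum_j X i j ^+ 2.

Lemma sqfrob_ge0 X : 0 <= sqfrob X.
Proof. by apply: sumr_ge0 => i _; apply: sumr_ge0 => j _; exact: sqr_ge0. Qed.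

Lemma sqfrob_eq0 X : (sqfrob X == 0) = (X == 0).
Proof.
apply/eqP/eqP => [X0|->]; last first.
  by rewrite /sqfrob big1 // => i _; rewrite big1 // => j _; rewrite mxE expr0n.
have rows_ge0 i : 0 <= \sum_j X i j ^+ 2 by apply: sumr_ge0 => j _; exact: sqr_ge0.
apply/matrixP => i j; rewrite mxE; apply/eqP; rewrite -sqrf_eq0; apply/eqP.
have row0 : \sum_j X i j ^+ 2 = 0.
  by apply: (psumr_eq0P _ X0) => // i' _; exact: rows_ge0.
by apply: (psumr_eq0P _ row0) => // k _; exact: sqr_ge0.
Qed.

Lemma sqfrob_mulmx_le (B : 'M[R]_n) (X : 'M[R]_(n, m)) M :
  (forall i k, `|B i k| <= M) ->
  `|\sum_i \sum_j 2 * X i j * (B *m X) i j| <= 2 * n%:R * M * sqfrob X.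
Proof.
move=> B_le.
have termwise i j k :
    `|2 * X i j * (B i k * X k j)| <= M * (X i j ^+ 2 + X k j ^+ 2).
  rewrite !normrM ger0_norm // -(real_normK (num_real (X i j))).
  rewrite -(real_normK (num_real (X k j))).
  set x := `|X i j|; set y := `|X k j|; set b := `|B i k|.
  apply: (@le_trans _ _ (b * (x ^+ 2 + y ^+ 2))); last first.
    by apply: ler_wpM2r; [rewrite addr_ge0 ?sqr_ge0|exact: B_le].
  rewrite -subr_ge0 (_ : _ - _ = b * (x - y) ^+ 2); last by ring.
  by rewrite mulr_ge0 ?sqr_ge0 ?normr_ge0.
have triple_sum : \sum_i \sum_j \sum_(k < n) (X i j ^+ 2 + X k j ^+ 2)
    = 2 * n%:R * sqfrob X.
  have first_sum : \sum_i \sum_j \sum_(k < n) X i j ^+ 2 = n%:R * sqfrob X.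
    rewrite mulr_sumr; apply: eq_bigr => i _; rewrite mulr_sumr.
    by apply: eq_bigr => j _; rewrite sumr_const card_ord mulr_natl.
  have second_sum : \sum_(i < n) \sum_j \sum_k X k j ^+ 2 = n%:R * sqfrob X.
    by rewrite sumr_const card_ord mulr_natl [sqfrob X]exchange_big.
  rewrite -[RHS]mulrA mulr_natl mulr2n -{1}first_sum -second_sum -big_split /=.
  apply: eq_bigr => i _; rewrite -big_split /=.
  by apply: eq_bigr => j _; rewrite -big_split.
rewrite (_ : _ * M * _ = M * (2 * n%:R * sqfrob X)); last by ring.
rewrite -triple_sum mulr_sumr.
apply: (le_trans (ler_norm_sum _ _ _)); apply: ler_sum => i _.
rewrite mulr_sumr; apply: (le_trans (ler_norm_sum _ _ _)); apply: ler_sum => j _.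
rewrite mulr_sumr mxE mulr_sumr; apply: (le_trans (ler_norm_sum _ _ _)).
by apply: ler_sum => k _; exact: termwise.
Qed.

Variable A : R -> 'M[R]_n.
Hypothesis A_cont : continuous A.

Lemma mxentry_bounded_itv (a b : R) : a <= b ->
  exists M, forall u, a <= u <= b -> forall i k, `|A u i k| <= M.
Proof.
move=> ab.
have normA_cont : {within `[a, b], continuous (fun u => `|A u|)}.
  apply: continuous_subspaceT => u.
  by apply: continuous_comp; [exact: A_cont|exact: norm_continuous].
have [c _ c_max] := EVT_max ab normA_cont.
exists `|A c| => u abu i k; apply: le_trans (c_max u _); last by rewrite in_itv.
rewrite [leRHS]/Num.Def.normr /= mx_normrE.
by apply: le_trans (le_bigmax _ _ (i, k)).
Qed.

Lemma linear_ode_vanish (X : R -> 'M[R]_(n, m)) (t0 : R) :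
  (forall t : R, is_derive t 1 X (A t *m X t)) -> X t0 = 0 -> forall t, X t = 0.
Proof.
move=> dX X0 t.
pose dsq u := \sum_i \sum_j 2 * X u i j * (A u *m X u) i j.
have dsqfrob (u : R) : is_derive u 1 (fun u => sqfrob (X u)) (dsq u).
  have -> : (fun u => sqfrob (X u)) = \sum_i \sum_j (fun u => X u i j ^+ 2).
    rewrite fct_sumE; apply/funext => v /=.
    by apply: eq_bigr => i _; rewrite fct_sumE.
  apply: is_derive_sum => i; apply: is_derive_sum => j.
  apply: is_derive_eq (is_deriveX 2 ((is_derive_mxP _ _ _).1 (dX u) i j)) _.
  by rewrite /GRing.scale /= expr1.
have vanish a b : a <= b ->
    (sqfrob (X a) = 0 -> sqfrob (X b) = 0) /\ (sqfrob (X b) = 0 -> sqfrob (X a) = 0).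
  move=> ab; have [M A_le] := mxentry_bounded_itv ab.
  apply: (gronwall_vanish ab dsqfrob (fun u => sqfrob_ge0 _)) => u /A_le.
  exact: sqfrob_mulmx_le.
have sq0 : sqfrob (X t0) = 0 by apply/eqP; rewrite sqfrob_eq0 X0.
apply/eqP; rewrite -sqfrob_eq0; apply/eqP.
have [t0t|tt0] := leP t0 t; first exact: (vanish _ _ t0t).1.
exact: (vanish _ _ (ltW tt0)).2.
Qed.

End LinearODE.

Section EvolutionOperator.
Variables (R : realType) (n : nat) (A : R -> 'M[R]_n) (Phi : R -> R -> 'M[R]_n).
Hypotheses (A_cont : continuous A) (Phi_evol : is_evol_op A Phi).

Lemma evol_op_solution m (X : R -> 'M[R]_(n, m)) (s : R) :
  (forall t : R, is_derive t 1 X (A t *m X t)) -> forall t, X t = Phi t s *m X s.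
Proof.
move=> dX t; apply/eqP; rewrite -subr_eq0; apply/eqP.
apply: (@linear_ode_vanish _ _ _ _ A_cont (fun t => X t - Phi t s *m X s) s _ _ t).
  move=> u; have := is_deriveB (dX u) (is_derive_mulmxr (X s) (Phi_evol.2 u s)).
  by rewrite -mulmxA -mulmxBr.
by rewrite Phi_evol.1 mul1mx subrr.
Qed.

Lemma evol_op_cocycle t s r : Phi t r = Phi t s *m Phi s r.
Proof.
have dPhi (u : R) : is_derive u 1 (Phi^~ r) (A u *m Phi u r) := Phi_evol.2 u r.
exact: (evol_op_solution s dPhi t).
Qed.

Lemma evol_opV t s : Phi t s *m Phi s t = 1%:M.
Proof. by rewrite -evol_op_cocycle Phi_evol.1. Qed.

End EvolutionOperator.

Lemma le0_of_le_expR_unbounded (R : realType) (x C : R) : 0 <= C ->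
  (forall T, exists2 y, T <= y & x <= C * expR (- y)) -> x <= 0.
Proof.
move=> C_ge0 x_le; rewrite leNgt; apply/negP => x_gt0.
have [y Ty] := x_le (ln ((C + 1) / x)).
have C1_gt0 : 0 < C + 1 by lra.
have : C * expR (- y) <= C * (x / (C + 1)).
  apply: ler_wpM2l => //; rewrite -[leRHS]lnK ?posrE ?divr_gt0 // ler_expR.
  by rewrite -invf_div lnV ?posrE ?divr_gt0 // lerN2.
have : C * (x / (C + 1)) < x.
  rewrite (_ : C * _ = x - x / (C + 1)); last by field; exact: lt0r_neq0.
  by have := divr_gt0 x_gt0 C1_gt0; lra.
lra.
Qed.

Section GrowthRate.
Variables (R : realType) (mu : R -> R).
Hypothesis mu_gr : growth_rate mu.

Definition logmu (t : R) : R := ln (mu t).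

Lemma mu_gt0 t : 0 < mu t.
Proof. by case: mu_gr. Qed.

Lemma logmu_lt : {homo logmu : x y / x < y}.
Proof.
by move=> x y xy; rewrite ltr_ln ?posrE ?mu_gt0 //; case: mu_gr => + _ _ _ _; apply.
Qed.

Lemma logmu_le : {homo logmu : x y / x <= y}.
Proof. by move=> x y; rewrite le_eqVlt => /predU1P[->//|/logmu_lt/ltW]. Qed.

Lemma logmu0 : logmu 0 = 0.
Proof. by rewrite /logmu; case: mu_gr => _ _ -> _ _; rewrite ln1. Qed.

Lemma logmu_ge0 t : 0 <= t -> 0 <= logmu t.
Proof. by move/logmu_le; rewrite logmu0. Qed.

Lemma logmu_le0 t : t <= 0 -> logmu t <= 0.
Proof. by move/logmu_le; rewrite logmu0. Qed.

Lemma powR_mu s a : mu s `^ a = expR (a * logmu s).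
Proof. by rewrite /powR gt_eqF ?mu_gt0. Qed.

Lemma powR_mu_ratio t s a : (mu t / mu s) `^ a = expR (a * (logmu t - logmu s)).
Proof.
rewrite /powR gt_eqF ?divr_gt0 ?mu_gt0 //.
by rewrite lnM ?posrE ?invr_gt0 ?mu_gt0 // lnV ?posrE ?mu_gt0.
Qed.

Lemma sgr_logmu s : Num.sg s * logmu s = `|logmu s|.
Proof.
have [s_lt0|s_gt0|->] := ltgtP s 0; last by rewrite sgr0 mul0r logmu0 normr0.
- by rewrite ltr0_sg // ltr0_norm ?mulN1r // -logmu0; exact: logmu_lt.
- by rewrite gtr0_sg // gtr0_norm ?mul1r // -logmu0; exact: logmu_lt.
Qed.

Lemma powR_mu_sgn s a : mu s `^ (sgnR s * a) = expR (a * `|logmu s|).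
Proof. by rewrite powR_mu /sgnR mulrAC sgr_logmu mulrC. Qed.

Lemma logmu_unbounded_above T : exists2 t, 0 <= t & T <= logmu t.
Proof.
case: mu_gr => _ _ _ mu_pinfty _.
have [M [_ M_le]] := (cvgryPge mu).1 mu_pinfty (expR T).
exists (`|M| + 1); first by rewrite addr_ge0.
rewrite -ler_expR /logmu lnK ?posrE ?mu_gt0 //; apply: M_le.
by apply: le_lt_trans (ler_norm M) _; lra.
Qed.

Lemma logmu_unbounded_below T : exists2 t, t <= 0 & logmu t <= T.
Proof.
case: mu_gr => _ _ _ _ mu_ninfty.
have [M [_ M_lt]] := (cvgr0Pnorm_lt mu).1 mu_ninfty (expR T) (expR_gt0 _).
exists (- `|M| - 1); first by have := normr_ge0 M; lra.
rewrite -ler_expR /logmu lnK ?posrE ?mu_gt0 //.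
rewrite -[mu _]gtr0_norm ?mu_gt0 //; apply/ltW/M_lt.
by have := ler_norm (- M); rewrite normrN; lra.
Qed.

Lemma le0_of_decay_pinfty (x C c : R) : 0 <= C -> 0 < c ->
  (forall t, 0 <= t -> x <= C * expR (- (c * logmu t))) -> x <= 0.
Proof.
move=> C_ge0 c_gt0 x_le; apply: le0_of_le_expR_unbounded C_ge0 _ => T.
have [t t_ge0 Tt] := logmu_unbounded_above (T / c).
exists (c * logmu t); last exact: x_le.
by rewrite -ler_pdivrMl // mulrC.
Qed.

Lemma le0_of_decay_ninfty (x C c : R) : 0 <= C -> 0 < c ->
  (forall t, t <= 0 -> x <= C * expR (c * logmu t)) -> x <= 0.
Proof.
move=> C_ge0 c_gt0 x_le; apply: le0_of_le_expR_unbounded C_ge0 _ => T.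
have [t t_le0 tT] := logmu_unbounded_below (- T / c).
exists (- (c * logmu t)); last by rewrite opprK; exact: x_le.
rewrite lerNr; have := ler_wpM2l (ltW c_gt0) tT.
by rewrite mulrCA divff ?mulr1 ?gt_eqF.
Qed.

End GrowthRate.

Lemma is_derive_logmu (R : realType) (mu : R -> R) (u : R) :
  differentiable_growth_rate mu -> is_derive u 1 (logmu mu) (derive1 mu u / mu u).
Proof.
case=> mu_gr /(_ u) /derivableP; rewrite -derive1E => dmu.
apply: is_derive_eq (is_derive1_comp (is_derive1_ln (mu_gt0 mu_gr u)) dmu) _.
by rewrite mulrC.
Qed.

Section Norm.
Variables (R : realType) (n : nat) (N : 'cV[R]_n -> R).
Hypothesis N_norm : is_norm N.

Lemma isnorm_ge0 x : 0 <= N x. Proof. by case: N_norm. Qed.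
Lemma isnorm_eq0 x : N x = 0 -> x = 0. Proof. by case: N_norm => _ + _ _; apply. Qed.
Lemma isnormZ a x : N (a *: x) = `|a| * N x. Proof. by case: N_norm => _ _ + _; apply. Qed.
Lemma isnormD x y : N (x + y) <= N x + N y. Proof. by case: N_norm => _ _ _; apply. Qed.

Lemma isnorm0 : N 0 = 0.
Proof. by rewrite -(scale0r 0) isnormZ normr0 mul0r. Qed.

Lemma isnormB x y : N (x - y) <= N x + N y.
Proof. by rewrite -[N y]mul1r -(normrN1 R) -isnormZ scaleN1r isnormD. Qed.

End Norm.

Section ShiftedSystem.
Variables (R : realType) (n : nat) (A : R -> 'M[R]_n) (Phi : R -> R -> 'M[R]_n)
  (mu : R -> R).
Hypotheses (A_cont : continuous A) (Phi_evol : is_evol_op A Phi)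
  (mu_diff : differentiable_growth_rate mu).

Local Notation L := (logmu mu).

(* [(mu t / mu s) `^ (- g) *: Phi t s], with the power written through [logmu]. *)
Definition shift_evol (g t s : R) : 'M[R]_n := expR (- g * (L t - L s)) *: Phi t s.

Local Notation shifted_coef g := (fun t => A t - (g * (derive1 mu t / mu t))%:M).

Lemma is_derive_expR_logmu (k s t : R) :
  is_derive t 1 (fun u => expR (k * (L u - L s)))
    (expR (k * (L t - L s)) * (k * (derive1 mu t / mu t))).
Proof.
have dL : is_derive t 1 (fun u => k * (L u - L s)) (k * (derive1 mu t / mu t)).
  apply: is_derive_eq (is_deriveZ k (is_deriveB (is_derive_logmu t mu_diff)
    (is_derive_cst (L s) t 1))) _.
  by rewrite subr0.
exact: is_derive1_comp (is_derive_expR _) dL.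
Qed.

Lemma shift_evol_is_evol_op g : is_evol_op (shifted_coef g) (shift_evol g).
Proof.
split=> [s|t s]; first by rewrite /shift_evol subrr mulr0 expR0 scale1r Phi_evol.1.
apply: is_derive_eq (is_derive_scalemx (is_derive_expR_logmu (- g) s t)
  (Phi_evol.2 t s)) _.
rewrite /shift_evol mulmxBl mul_scalar_mx -scalemxAr scalerA.
by rewrite -scaleNr; congr (_ + _ *: _); ring.
Qed.

Lemma shift_evol_unique g Psi : is_evol_op (shifted_coef g) Psi -> Psi = shift_evol g.
Proof.
move=> Psi_evol; apply/funext => t; apply/funext => s.
pose Y u := expR (g * (L u - L s)) *: Psi u s.
have dY (u : R) : is_derive u 1 Y (A u *m Y u).
  apply: is_derive_eq (is_derive_scalemx (is_derive_expR_logmu g s u)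
    (Psi_evol.2 u s)) _.
  by rewrite /Y mulmxBl mul_scalar_mx scalerBr scalerA -scalemxAr subrK.
have := evol_op_solution A_cont Phi_evol s dY t.
rewrite /Y /shift_evol subrr mulr0 expR0 scale1r Psi_evol.1 mulmx1 => <-.
by rewrite scalerA -expRD mulNr addNr expR0 scale1r.
Qed.

Lemma shift_evol_cocycle g t s r :
  shift_evol g t r = shift_evol g t s *m shift_evol g s r.
Proof.
rewrite /shift_evol -scalemxAl -scalemxAr scalerA -expRD.
by rewrite -(evol_op_cocycle A_cont Phi_evol); congr (expR _ *: _); ring.
Qed.

Lemma shift_evolV g t s : shift_evol g t s *m shift_evol g s t = 1%:M.
Proof.
by rewrite -shift_evol_cocycle /shift_evol subrr mulr0 expR0 scale1r Phi_evol.1.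
Qed.

Lemma shift_evol_shift g g' t s :
  shift_evol g' t s = expR ((g - g') * (L t - L s)) *: shift_evol g t s.
Proof. by rewrite /shift_evol scalerA -expRD; congr (expR _ *: _); ring. Qed.

End ShiftedSystem.

Lemma interval_locally_constant (R : realType) (G : R -> Prop) (a b : R) :
  a <= b -> G a ->
  (forall g, a <= g <= b -> exists2 e, 0 < e & forall x, `|x - g| < e -> G x <-> G g) ->
  G b.
Proof.
move=> ab Ga G_loc.
pose S := [set g | a <= g <= b /\ G g].
have Sa : S a by rewrite /S /= lexx ab.
have S_sup : has_sup S by split; [exists a|exists b => g [/andP[]]].
set c := sup S.
have ac : a <= c by exact: sup_upper_bound.
have cb : c <= b by apply: ge_sup; [exists a|move=> g [/andP[]]].
have [e e_gt0 Ge] := G_loc c (introT andP (conj ac cb)).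
have Gc : G c.
  have [h [/andP[ah hb] Gh]] := sup_adherent e_gt0 S_sup; rewrite -/c => ch.
  have hc : h <= c by apply: sup_upper_bound; rewrite // /S /= ah hb.
  have hc_near : `|h - c| < e by rewrite ler0_norm ?subr_le0 //; lra.
  exact: (Ge h hc_near).1 Gh.
suff -> : b = c by [].
apply/eqP; rewrite eq_le cb andbT leNgt; apply/negP => cb'.
pose x := Num.min (c + e / 2) b.
have cx : c < x by rewrite lt_min cb' andbT; lra.
have xb : x <= b by rewrite ge_min lexx orbT.
have xe : x <= c + e / 2 by rewrite ge_min lexx.
have Sx : S x.
  split; first by apply/andP; split; lra.
  have xc_near : `|x - c| < e by rewrite gtr0_norm ?subr_gt0 //; lra.
  exact: (Ge x xc_near).2 Gc.
by have := sup_upper_bound S_sup Sx; rewrite -/c; lra.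
Qed.

Section ColumnSpaces.
Variables (R : realType) (n : nat).
Implicit Types (xi : 'cV[R]_n) (P : 'M[R]_n).

Lemma setdim_rowspace m (S : set 'cV[R]_n) (B : 'M[R]_(m, n)) :
  (forall xi, S xi <-> (xi^T <= B)%MS) -> setdim S = \rank B.
Proof.
move=> SE; apply/eqP; rewrite eqn_leq; apply/andP; split.
  apply/bigmax_leqP => k /asboolP[M [SM <-]].
  suff /mxrankS : (M^T <= B)%MS by rewrite mxrank_tr.
  by apply/row_subP => j; rewrite -tr_col; apply/SE.
have rB : (\rank B < n.+1)%N by rewrite ltnS rank_leq_col.
apply: (@leq_bigmax_cond _ _ _ (Ordinal rB)); apply/asboolP.
exists (row_base B)^T; split; last by rewrite mxrank_tr eq_row_base.
move=> j; apply/SE; rewrite -tr_row trmxK.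
by apply: submx_trans (row_sub _ _) _; rewrite eq_row_base.
Qed.

Lemma rowspace_cap_neq0 m1 m2 (B1 : 'M[R]_(m1, n)) (B2 : 'M[R]_(m2, n)) :
  (n < \rank B1 + \rank B2)%N ->
  exists xi, [/\ xi != 0, (xi^T <= B1)%MS & (xi^T <= B2)%MS].
Proof.
move=> rB12.
have cap_neq0 : (B1 :&: B2)%MS != 0.
  rewrite -mxrank_eq0 -lt0n; move: rB12; rewrite -mxrank_sum_cap.
  by have := rank_leq_col (B1 + B2)%MS; lia.
exists (nz_row (B1 :&: B2)%MS)^T; rewrite trmxK -(inj_eq trmx_inj) trmx0 trmxK nz_row_eq0.
by split=> //; apply: submx_trans (nz_row_sub _) _; [exact: capmxSl|exact: capmxSr].
Qed.

Lemma idempotent_fixedE P xi : P *m P = P -> P *m xi = xi <-> (xi^T <= P^T)%MS.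
Proof.
move=> P_idem; split=> [<-|/submxP[D xiD]]; first by rewrite trmx_mul submxMl.
have -> : xi = P *m D^T by rewrite -[xi]trmxK xiD trmx_mul trmxK.
by rewrite mulmxA P_idem.
Qed.

Lemma mulmx_kerE P xi : P *m xi = 0 <-> (xi^T <= kermx P^T)%MS.
Proof.
by rewrite sub_kermx -trmx_mul -(inj_eq trmx_inj) trmxK trmx0; split=> /eqP.
Qed.

Lemma mulmx_cV_inj (A B : 'M[R]_n) : (forall xi, A *m xi = B *m xi) -> A = B.
Proof.
move=> AB; apply/matrixP => i j.
by have /matrixP/(_ i 0) := AB (delta_mx j 0); rewrite -!colE !mxE.
Qed.

End ColumnSpaces.

Section Dichotomy.
Variables (R : realType) (n : nat) (N : 'cV[R]_n -> R) (A : R -> 'M[R]_n)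
  (Phi : R -> R -> 'M[R]_n) (mu : R -> R).
Hypotheses (N_norm : is_norm N) (A_cont : continuous A)
  (Phi_evol : is_evol_op A Phi) (mu_diff : differentiable_growth_rate mu).

Let mu_gr : growth_rate mu := mu_diff.1.
Local Notation L := (logmu mu).
Local Notation Psi := (shift_evol Phi mu).

Definition invariant_proj (P : R -> 'M[R]_n) : Prop :=
  (forall t, P t *m P t = P t) /\ (forall t s, P t *m Phi t s = Phi t s *m P s).

(* The bounds of [NmuD], with [(mu t / mu s) `^ a * mu s `^ (sgnR s * th)]
   rewritten as [expR (a * (L t - L s) + th * `|L s|)]. *)
Definition stable_bound g P K a th : Prop := forall t s xi, s <= t ->
  N (Psi g t s *m P s *m xi) <= K * expR (a * (L t - L s) + th * `|L s|) * N xi.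

Definition unstable_bound g P K b nu : Prop := forall t s xi, t <= s ->
  N (Psi g t s *m (1%:M - P s) *m xi)
    <= K * expR (b * (L t - L s) + nu * `|L s|) * N xi.

Definition stable_estimate g P : Prop := exists K a th,
  [/\ 1 <= K, 0 <= th, a + th < 0 & stable_bound g P K a th].

Definition unstable_estimate g P : Prop := exists K b nu,
  [/\ 1 <= K, 0 <= nu, 0 < b - nu & unstable_bound g P K b nu].

Definition mu_dichotomy g P : Prop :=
  [/\ invariant_proj P, stable_estimate g P & unstable_estimate g P].

Lemma commute_shift_evolE g (P : R -> 'M[R]_n) :
  (forall t s, P t *m Phi t s = Phi t s *m P s) <->
  (forall t s, P t *m Psi g t s = Psi g t s *m P s).
Proof.
split=> P_comm t s; first by rewrite -scalemxAl -scalemxAr P_comm.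
apply: (scalerI (lt0r_neq0 (expR_gt0 (- g * (L t - L s))))).
by rewrite scalemxAr scalemxAl; exact: P_comm.
Qed.

Lemma NmuD_shift_evolE g : NmuD N mu (Psi g) <-> exists P, mu_dichotomy g P.
Proof.
split=> [[P [K [a [b [th [nu [P_idem P_comm]]]]]]]|[P [[P_idem P_comm] Pst Pun]]].
  case=> [[K_ge1 _ _ th_ge0 nu_ge0] [ath bnu]] Pb Qb.
  exists P; split; first by split=> //; apply/(commute_shift_evolE g).
  - exists K, a, th; split=> // t s xi st.
    by rewrite expRD mulrA -(powR_mu_ratio mu_gr) -(powR_mu_sgn mu_gr); exact: Pb.
  - exists K, b, nu; split=> // t s xi ts.
    by rewrite expRD mulrA -(powR_mu_ratio mu_gr) -(powR_mu_sgn mu_gr); exact: Qb.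
case: Pst Pun => Ks [a [th [Ks_ge1 th_ge0 ath Pb]]] [Ku [b [nu [Ku_ge1 nu_ge0 bnu Qb]]]].
have K_ge1 : 1 <= Num.max Ks Ku by rewrite le_max Ks_ge1.
exists P, (Num.max Ks Ku), a, b, th, nu; split=> //.
- by apply/(commute_shift_evolE g).
- by split; [split=> //; lra|split].
- move=> t s xi st; rewrite (powR_mu_ratio mu_gr) (powR_mu_sgn mu_gr).
  rewrite -[X in X * N xi]mulrA -expRD.
  apply: le_trans (Pb t s xi st) _; apply: ler_wpM2r; first exact: isnorm_ge0.
  by apply: ler_wpM2r; [exact: expR_ge0|rewrite le_max lexx].
- move=> t s xi ts; rewrite (powR_mu_ratio mu_gr) (powR_mu_sgn mu_gr).
  rewrite -[X in X * N xi]mulrA -expRD.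
  apply: le_trans (Qb t s xi ts) _; apply: ler_wpM2r; first exact: isnorm_ge0.
  by apply: ler_wpM2r; [exact: expR_ge0|rewrite le_max lexx orbT].
Qed.

Lemma stable_bound_shift g g' P K a th :
  stable_bound g P K a th -> stable_bound g' P K (a + g - g') th.
Proof.
move=> Pb t s xi st; rewrite -mulmxA (shift_evol_shift _ _ g) -scalemxAl mulmxA.
rewrite isnormZ // ger0_norm ?expR_ge0 //.
apply: le_trans (ler_wpM2l (expR_ge0 _) (Pb t s xi st)) _.
set d := L t - L s; set l := `|L s|.
have -> : (a + g - g') * d + th * l = (g - g') * d + (a * d + th * l) by ring.
by rewrite [in leRHS]expRD le_eqVlt; apply/orP; left; apply/eqP; ring.
Qed.

Lemma unstable_bound_shift g g' P K b nu :
  unstable_bound g P K b nu -> unstable_bound g' P K (b + g - g') nu.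
Proof.
move=> Qb t s xi ts; rewrite -mulmxA (shift_evol_shift _ _ g) -scalemxAl mulmxA.
rewrite isnormZ // ger0_norm ?expR_ge0 //.
apply: le_trans (ler_wpM2l (expR_ge0 _) (Qb t s xi ts)) _.
set d := L t - L s; set l := `|L s|.
have -> : (b + g - g') * d + nu * l = (g - g') * d + (b * d + nu * l) by ring.
by rewrite [in leRHS]expRD le_eqVlt; apply/orP; left; apply/eqP; ring.
Qed.

Lemma stable_estimate_nbhs g P : stable_estimate g P ->
  exists2 e, 0 < e & forall g', g - e < g' -> stable_estimate g' P.
Proof.
case=> K [a [th [K_ge1 th_ge0 ath Pb]]]; exists (- (a + th)); first lra.
move=> g' gg'; exists K, (a + g - g'), th; split=> //; first lra.
exact: stable_bound_shift.
Qed.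

Lemma unstable_estimate_nbhs g P : unstable_estimate g P ->
  exists2 e, 0 < e & forall g', g' < g + e -> unstable_estimate g' P.
Proof.
case=> K [b [nu [K_ge1 nu_ge0 bnu Qb]]]; exists (b - nu) => // g' gg'.
exists K, (b + g - g'), nu; split=> //; first lra.
exact: unstable_bound_shift.
Qed.

Lemma mu_dichotomy_nbhs g P : mu_dichotomy g P ->
  exists2 e, 0 < e & forall g', `|g' - g| < e -> mu_dichotomy g' P.
Proof.
case=> P_inv /stable_estimate_nbhs[e1 e1_gt0 Ps] /unstable_estimate_nbhs[e2 e2_gt0 Pu].
exists (Num.min e1 e2); first by rewrite lt_min e1_gt0.
move=> g'; rewrite lt_min !ltr_norml => /andP[/andP[? ?] /andP[? ?]].
by split=> //; [apply: Ps|apply: Pu]; lra.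
Qed.

Lemma mu_dichotomy_between g1 g2 g P : mu_dichotomy g1 P -> mu_dichotomy g2 P ->
  g1 <= g <= g2 -> mu_dichotomy g P.
Proof.
case=> P_inv /stable_estimate_nbhs[e1 e1_gt0 Ps] _.
case=> _ _ /unstable_estimate_nbhs[e2 e2_gt0 Pu] /andP[g1g gg2].
by split=> //; [apply: Ps|apply: Pu]; lra.
Qed.

Lemma invariant_proj_compl P : invariant_proj P -> invariant_proj (fun t => 1%:M - P t).
Proof.
case=> P_idem P_comm; split=> [t|t s].
  by rewrite mulmxBl !mulmxBr !mul1mx mulmx1 P_idem subrr subr0.
by rewrite mulmxBl mulmxBr mul1mx mulmx1 P_comm.
Qed.

Lemma norm_shift_evol0 g t xi :
  N (Psi g t 0 *m xi) = N (Phi t 0 *m xi) * mu t `^ (- g).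
Proof.
rewrite -scalemxAl isnormZ // ger0_norm ?expR_ge0 // logmu0 // subr0.
by rewrite (powR_mu mu_gr) mulrC mulNr.
Qed.

Lemma Uman0E g xi : Uman N mu Phi g (0, xi) <->
  exists M, forall t, 0 <= t -> N (Psi g t 0 *m xi) <= M.
Proof.
rewrite /Uman /=; split=> -[M xi_bdd]; exists M => t /xi_bdd;
  by rewrite norm_shift_evol0.
Qed.

Lemma Vman0E g xi : Vman N mu Phi g (0, xi) <->
  exists M, forall t, t <= 0 -> N (Psi g t 0 *m xi) <= M.
Proof.
rewrite /Vman /=; split=> -[M xi_bdd]; exists M => t /xi_bdd;
  by rewrite norm_shift_evol0.
Qed.

Lemma Uman0_mu_dichotomy g P xi :
  mu_dichotomy g P -> Uman N mu Phi g (0, xi) <-> P 0 *m xi = xi.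
Proof.
case=> P_inv [Ks [a [th [Ks_ge1 th_ge0 ath Pb]]]] [Ku [b [nu [Ku_ge1 _ bnu Qb]]]].
have [Q_idem /(commute_shift_evolE g) Q_comm] := invariant_proj_compl P_inv.
have stable0 t v : 0 <= t -> N (Psi g t 0 *m P 0 *m v) <= Ks * N v.
  move=> t_ge0; apply: le_trans (Pb t 0 v t_ge0) _.
  rewrite logmu0 // normr0 mulr0 addr0 subr0 ler_wpM2r ?isnorm_ge0 //.
  rewrite ler_piMr //; first lra.
  by rewrite expR_le1 nmulr_rle0 ?logmu_ge0 //; lra.
rewrite Uman0E; split=> [[M xi_bdd]|Pxi]; last first.
  by exists (Ks * N xi) => t t_ge0; rewrite -{1}Pxi mulmxA; exact: stable0.
(* The unstable part [v] of a forward-bounded solution is pulled back from any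
   time [t >= 0] by the unstable estimate, which decays as [t] grows. *)
set v := (1%:M - P 0) *m xi.
suff : v = 0 by rewrite /v mulmxBl mul1mx => /eqP; rewrite subr_eq0 => /eqP.
pose w t := Psi g t 0 *m v.
have w_bdd t : 0 <= t -> N (w t) <= M + Ks * N xi.
  move=> t_ge0; rewrite /w /v mulmxA mulmxBr mulmx1 mulmxBl.
  by apply: le_trans (isnormB N_norm _ _) _; apply: lerD; [exact: xi_bdd|exact: stable0].
have v_eq t : v = Psi g 0 t *m (1%:M - P t) *m w t.
  rewrite /w -mulmxA [(1%:M - P t) *m _]mulmxA Q_comm -mulmxA.
  rewrite [Psi g 0 t *m _]mulmxA (shift_evolV mu A_cont Phi_evol) mul1mx.
  by rewrite /v mulmxA Q_idem.
have M_ge0 : 0 <= M by apply: le_trans (xi_bdd 0 (lexx _)); exact: isnorm_ge0.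
apply: (isnorm_eq0 N_norm); apply/eqP; rewrite eq_le isnorm_ge0 // andbT.
apply: (le0_of_decay_pinfty mu_gr (C := Ku * (M + Ks * N xi)) (c := b - nu)) => //.
  by rewrite mulr_ge0 ?addr_ge0 ?mulr_ge0 ?isnorm_ge0 //; lra.
move=> t t_ge0; rewrite (v_eq t); apply: le_trans (Qb 0 t (w t) t_ge0) _.
rewrite logmu0 // sub0r ger0_norm ?logmu_ge0 // mulrAC.
have -> : b * - L t + nu * L t = - ((b - nu) * L t) by ring.
by apply: ler_wpM2r; [exact: expR_ge0|apply: ler_wpM2l; [lra|exact: w_bdd]].
Qed.

Lemma Vman0_mu_dichotomy g P xi :
  mu_dichotomy g P -> Vman N mu Phi g (0, xi) <-> P 0 *m xi = 0.
Proof.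
case=> P_inv [Ks [a [th [Ks_ge1 _ ath Pb]]]] [Ku [b [nu [Ku_ge1 nu_ge0 bnu Qb]]]].
have [P_idem /(commute_shift_evolE g) P_comm] := P_inv.
have unstable0 t v : t <= 0 -> N (Psi g t 0 *m (1%:M - P 0) *m v) <= Ku * N v.
  move=> t_le0; apply: le_trans (Qb t 0 v t_le0) _.
  rewrite logmu0 // normr0 mulr0 addr0 subr0 ler_wpM2r ?isnorm_ge0 //.
  rewrite ler_piMr //; first lra.
  by rewrite expR_le1 pmulr_rle0 ?logmu_le0 //; lra.
rewrite Vman0E; split=> [[M xi_bdd]|Pxi]; last first.
  have Qxi : (1%:M - P 0) *m xi = xi by rewrite mulmxBl mul1mx Pxi subr0.
  by exists (Ku * N xi) => t t_le0; rewrite -{1}Qxi mulmxA; exact: unstable0.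
set v := P 0 *m xi.
pose w t := Psi g t 0 *m v.
have w_bdd t : t <= 0 -> N (w t) <= M + Ku * N xi.
  move=> t_le0.
  have -> : w t = Psi g t 0 *m xi - Psi g t 0 *m (1%:M - P 0) *m xi.
    by rewrite -mulmxA mulmxBl mul1mx mulmxBr opprB addrC subrK.
  by apply: le_trans (isnormB N_norm _ _) _; apply: lerD; [exact: xi_bdd|exact: unstable0].
have v_eq t : v = Psi g 0 t *m P t *m w t.
  rewrite /w -mulmxA [P t *m _]mulmxA P_comm -mulmxA.
  rewrite [Psi g 0 t *m _]mulmxA (shift_evolV mu A_cont Phi_evol) mul1mx.
  by rewrite /v mulmxA P_idem.
have M_ge0 : 0 <= M by apply: le_trans (xi_bdd 0 (lexx _)); exact: isnorm_ge0.
apply: (isnorm_eq0 N_norm); apply/eqP; rewrite eq_le isnorm_ge0 // andbT.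
have c_gt0 : 0 < - (a + th) by lra.
apply: (le0_of_decay_ninfty mu_gr (C := Ks * (M + Ku * N xi)) _ c_gt0).
  by rewrite mulr_ge0 ?addr_ge0 ?mulr_ge0 ?isnorm_ge0 //; lra.
move=> t t_le0; rewrite (v_eq t); apply: le_trans (Pb 0 t (w t) t_le0) _.
rewrite logmu0 // sub0r ler0_norm ?logmu_le0 // mulrAC.
have -> : a * - L t + th * - L t = - (a + th) * L t by ring.
by apply: ler_wpM2r; [exact: expR_ge0|apply: ler_wpM2l; [lra|exact: w_bdd]].
Qed.

Local Notation U := (Uman N mu Phi).
Local Notation V := (Vman N mu Phi).

Lemma Uman_mono g1 g2 : g1 <= g2 -> U g1 `<=` U g2.
Proof.
move=> g12 [s xi] [M xi_bdd]; exists M => t t_ge0; apply: le_trans (xi_bdd t t_ge0).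
rewrite ler_wpM2l ?isnorm_ge0 // !(powR_mu mu_gr) ler_expR.
by rewrite ler_wpM2r ?logmu_ge0 // lerN2.
Qed.

Lemma Vman_mono g1 g2 : g1 <= g2 -> V g2 `<=` V g1.
Proof.
move=> g12 [s xi] [M xi_bdd]; exists M => t t_le0; apply: le_trans (xi_bdd t t_le0).
rewrite ler_wpM2l ?isnorm_ge0 // !(powR_mu mu_gr) ler_expR.
by rewrite ler_wnM2r ?logmu_le0 // lerN2.
Qed.

Lemma Uman_transport g s xi : U g (s, xi) <-> U g (0, Phi 0 s *m xi).
Proof.
have E t : Phi t 0 *m (Phi 0 s *m xi) = Phi t s *m xi.
  by rewrite mulmxA -(evol_op_cocycle A_cont Phi_evol).
by rewrite /Uman /=; split=> -[M xi_bdd]; exists M => t /xi_bdd; rewrite E.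
Qed.

Lemma Vman_transport g s xi : V g (s, xi) <-> V g (0, Phi 0 s *m xi).
Proof.
have E t : Phi t 0 *m (Phi 0 s *m xi) = Phi t s *m xi.
  by rewrite mulmxA -(evol_op_cocycle A_cont Phi_evol).
by rewrite /Vman /=; split=> -[M xi_bdd]; exists M => t /xi_bdd; rewrite E.
Qed.

Lemma rhoND_mu_dichotomyE g : rhoND N mu A g <-> exists P, mu_dichotomy g P.
Proof.
apply: iff_trans (NmuD_shift_evolE g); split=> [/contrapT[Psi' [Psi_evol Psi_dich]]|].
  by rewrite (shift_evol_unique A_cont Phi_evol mu_diff Psi_evol) in Psi_dich.
by move=> shift_dich; apply; exists (Psi g); split=> //; exact: shift_evol_is_evol_op.
Qed.

Lemma invariant_proj_conj P s : invariant_proj P -> P s = Phi s 0 *m P 0 *m Phi 0 s.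
Proof. by case=> _ P_comm; rewrite -P_comm -mulmxA (evol_opV A_cont Phi_evol) mulmx1. Qed.

Lemma mrank_Uman g P : mu_dichotomy g P -> mrank (U g) = \rank (P 0%R)^T.
Proof.
move=> D; have [[P_idem _] _ _] := D; apply: setdim_rowspace => xi.
exact: iff_trans (Uman0_mu_dichotomy xi D) (idempotent_fixedE xi (P_idem 0)).
Qed.

Lemma mrank_Vman g P : mu_dichotomy g P -> mrank (V g) = (n - \rank (P 0%R)^T)%N.
Proof.
move=> D; rewrite -mxrank_ker; apply: setdim_rowspace => xi.
exact: iff_trans (Vman0_mu_dichotomy xi D) (mulmx_kerE _ xi).
Qed.

Lemma Uman0_resolvent_const g1 g2 : g1 <= g2 ->
  (forall g, g1 <= g <= g2 -> rhoND N mu A g) ->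
  forall xi, U g2 (0, xi) <-> U g1 (0, xi).
Proof.
move=> g12 resolvent.
pose G g := forall xi, U g (0, xi) <-> U g1 (0, xi).
apply: (@interval_locally_constant _ G g1 g2 g12) => [xi|g]; first exact: iff_refl.
move=> /resolvent /rhoND_mu_dichotomyE[P D].
have [e e_gt0 De] := mu_dichotomy_nbhs D; exists e => // x /De Dx.
have UxUg xi : U x (0, xi) <-> U g (0, xi).
  exact: iff_trans (Uman0_mu_dichotomy xi Dx) (iff_sym (Uman0_mu_dichotomy xi D)).
split=> Gy xi; first exact: iff_trans (iff_sym (UxUg xi)) (Gy xi).
exact: iff_trans (UxUg xi) (Gy xi).
Qed.

Lemma resolvent_of_rank_le g1 g2 P1 P2 : g1 <= g2 ->
  mu_dichotomy g1 P1 -> mu_dichotomy g2 P2 ->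
  (\rank (P2 0%R)^T <= \rank (P1 0%R)^T)%N ->
  forall g, g1 <= g <= g2 -> rhoND N mu A g.
Proof.
move=> g12 D1 D2 rk g g_in; apply/rhoND_mu_dichotomyE; exists P1.
have [[P1_idem _] _ _] := D1; have [[P2_idem _] _ _] := D2.
suff P12 : P1 = P2 by apply: (mu_dichotomy_between D1 _ g_in); rewrite P12.
have im12 : ((P1 0%R)^T <= (P2 0%R)^T)%MS.
  apply/row_subP => j; rewrite -tr_col; apply/(idempotent_fixedE _ (P2_idem 0)).
  apply/(Uman0_mu_dichotomy _ D2)/(Uman_mono g12)/(Uman0_mu_dichotomy _ D1).
  by apply/(idempotent_fixedE _ (P1_idem 0)); rewrite tr_col row_sub.
have /andP[_ im21] : ((P1 0%R)^T == (P2 0%R)^T)%MS.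
  by rewrite -(mxrank_leqif_eq im12).2 eqn_leq rk mxrankS.
have P12_0 : P1 0 = P2 0.
  apply: mulmx_cV_inj => xi.
  have P2xi_fixed : P1 0 *m (P2 0 *m xi) = P2 0 *m xi.
    apply/(idempotent_fixedE _ (P1_idem 0)); apply: submx_trans im21.
    by apply/(idempotent_fixedE _ (P2_idem 0)); rewrite mulmxA P2_idem.
  have : P1 0 *m (xi - P2 0 *m xi) = 0.
    apply/(Vman0_mu_dichotomy _ D1)/(Vman_mono g12)/(Vman0_mu_dichotomy _ D2).
    by rewrite mulmxBr mulmxA P2_idem subrr.
  by rewrite mulmxBr P2xi_fixed => /eqP; rewrite subr_eq0 => /eqP.
have [[P1_inv _ _] [P2_inv _ _]] := (D1, D2).
apply/funext => s.
by rewrite (invariant_proj_conj s P1_inv) (invariant_proj_conj s P2_inv) P12_0.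
Qed.

Lemma spectrum_between_rankE g1 g2 P1 P2 : g1 <= g2 ->
  mu_dichotomy g1 P1 -> mu_dichotomy g2 P2 ->
  (exists2 g, g1 <= g <= g2 & SigmaND N mu A g) <->
  (\rank (P1 0%R)^T < \rank (P2 0%R)^T)%N.
Proof.
move=> g12 D1 D2; split=> [[g g_in Sg]|rk].
  by rewrite ltnNge; apply/negP => rk; exact: (resolvent_of_rank_le g12 D1 D2 rk g_in).
apply: contrapT => no_spec.
have U21 : forall xi, U g2 (0, xi) <-> U g1 (0, xi).
  by apply: (Uman0_resolvent_const g12) => g g_in Sg; apply: no_spec; exists g.
suff : mrank (U g2) = mrank (U g1).
  by rewrite (mrank_Uman D1) (mrank_Uman D2) => rk_eq; move: rk; rewrite rk_eq ltnn.
by congr setdim; apply/seteqP; split=> xi /U21.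
Qed.

Lemma Uman_cap_Vman_nontrivialE g1 g2 P1 P2 : g1 <= g2 ->
  mu_dichotomy g1 P1 -> mu_dichotomy g2 P2 ->
  (U g2 `&` V g1 <> [set p | p.2 = 0]) <->
  (\rank (P1 0%R)^T < \rank (P2 0%R)^T)%N.
Proof.
move=> g12 D1 D2; have [[P1_idem _] _ _] := D1; have [[P2_idem _] _ _] := D2.
split=> [nontrivial|rk trivial].
  rewrite ltnNge; apply/negP => rk; apply: nontrivial.
  have U21 := Uman0_resolvent_const g12 (resolvent_of_rank_le g12 D1 D2 rk).
  apply/seteqP; split=> -[s xi] /=; last first.
    by move=> ->; split; exists 0 => t _; rewrite mulmx0 isnorm0 // mul0r.
  case=> /Uman_transport/U21/(Uman0_mu_dichotomy _ D1) fixed.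
  move=> /Vman_transport/(Vman0_mu_dichotomy _ D1); rewrite fixed => killed.
  by rewrite -[xi]mul1mx -(evol_opV A_cont Phi_evol s 0) -mulmxA killed mulmx0.
have rk_sum : (n < \rank (P2 0%R)^T + \rank (kermx (P1 0%R)^T))%N.
  by rewrite mxrank_ker; have := rank_leq_col (P1 0%R)^T; lia.
have [xi [xi_neq0 xi_im xi_ker]] := rowspace_cap_neq0 rk_sum.
have : (U g2 `&` V g1) (0, xi).
  split; first by apply/(Uman0_mu_dichotomy _ D2)/(idempotent_fixedE _ (P2_idem 0)).
  exact/(Vman0_mu_dichotomy _ D1)/mulmx_kerE.
by rewrite trivial /= => /eqP; rewrite (negbTE xi_neq0).
Qed.

End Dichotomy.

Theorem mainTheorem6 (R : realType) (n : nat) (N : 'cV[R]_n -> R)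
    (A : R -> 'M[R]_n) (Phi : R -> R -> 'M[R]_n) (mu : R -> R)
    (gamma1 gamma2 : R) :
  (0 < n)%N ->
  is_norm N ->
  continuous A ->
  is_evol_op A Phi ->
  differentiable_growth_rate mu ->
  rhoND N mu A gamma1 ->
  rhoND N mu A gamma2 ->
  gamma1 < gamma2 ->
  [/\ (Uman N mu Phi gamma2 `&` Vman N mu Phi gamma1
         <> [set p : R * 'cV[R]_n | p.2 = 0])
        <-> (exists2 gamma, gamma1 <= gamma <= gamma2 & SigmaND N mu A gamma),
      (exists2 gamma, gamma1 <= gamma <= gamma2 & SigmaND N mu A gamma)
        <-> (mrank (Uman N mu Phi gamma1) < mrank (Uman N mu Phi gamma2))%N &
      (mrank (Uman N mu Phi gamma1) < mrank (Uman N mu Phi gamma2))%N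
        <-> (mrank (Vman N mu Phi gamma2) < mrank (Vman N mu Phi gamma1))%N].
Proof.
move=> _ N_norm A_cont Phi_evol mu_diff rho1 rho2 /ltW g12.
have dichE := rhoND_mu_dichotomyE N_norm A_cont Phi_evol mu_diff.
have [P1 D1] := (dichE gamma1).1 rho1.
have [P2 D2] := (dichE gamma2).1 rho2.
have rkU := mrank_Uman N_norm A_cont Phi_evol mu_diff.
have rkV := mrank_Vman N_norm A_cont Phi_evol mu_diff.
rewrite (rkU _ _ D1) (rkU _ _ D2) (rkV _ _ D1) (rkV _ _ D2).
have spectrum := spectrum_between_rankE N_norm A_cont Phi_evol mu_diff g12 D1 D2.
have cap := Uman_cap_Vman_nontrivialE N_norm A_cont Phi_evol mu_diff g12 D1 D2.
have rk1 := rank_leq_col (P1 0%R)^T; have rk2 := rank_leq_col (P2 0%R)^T.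
split=> //; first exact: iff_trans cap (iff_sym spectrum).
by split=> ?; lia.
Qed.
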